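(* For any continuous function $f:\mathrm{SO}(3)\to S^3$, there exists a rotation $R\in\mathrm{SO}(3)$ such that $d(R,\mathbf{R}_Q(f(R)))=\pi$.
   Context: $S^3\subset\mathbb{R}^4$ is the set of unit quaternions, identifying $w+x\mathbf{i}+y\mathbf{j}+z\mathbf{k}$ with $(w,x,y,z)$. $\mathbf{R}_Q:S^3\to\mathrm{SO}(3)$ is the standard conversion from a unit quaternion to the rotation it represents: $$\mathbf{R}_Q(w,x,y,z)=\begin{bmatrix}1-2y^2-2z^2 & 2(xy-zw) & 2(xz+yw)\\ 2(xy+zw) & 1-2x^2-2z^2 & 2(yz-xw)\\ 2(xz-yw) & 2(yz+xw) & 1-2x^2-2y^2\end{bmatrix}.$$ For $R_1,R_2\in\mathrm{SO}(3)$, $d(R_1,R_2)=\cos^{-1}\frac{\mathrm{tr}(R_2R_1^{-1})-1}{2}\in[0,\pi]$ is the angle of the rotation $R_2R_1^{-1}$. *)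

From HB Require Import structures.
From mathcomp Require Import all_boot all_order all_algebra.
From mathcomp Require Import all_classical all_reals all_analysis.
Set Implicit Arguments. Unset Strict Implicit. Unset Printing Implicit Defensive.
Import Order.TTheory GRing.Theory Num.Theory.
Import numFieldNormedType.Exports.
Local Open Scope classical_set_scope.
Local Open Scope ring_scope.

Definition SO3 (R : realType) : set 'M[R]_3 :=
  [set M | M *m M^T = 1%:M /\ \det M = 1].

(* A quaternion w + x i + y j + z k is the row vector (w, x, y, z). *)
Definition qw {R : realType} (q : 'rV[R]_4) : R := q ord0 (@Ordinal 4 0 isT).
Definition qx {R : realType} (q : 'rV[R]_4) : R := q ord0 (@Ordinal 4 1 isT).
Definition qy {R : realType} (q : 'rV[R]_4) : R := q ord0 (@Ordinal 4 2 isT).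
Definition qz {R : realType} (q : 'rV[R]_4) : R := q ord0 (@Ordinal 4 3 isT).

Definition S3 (R : realType) : set 'rV[R]_4 :=
  [set q | qw q ^+ 2 + qx q ^+ 2 + qy q ^+ 2 + qz q ^+ 2 = 1].

Definition RQ {R : realType} (q : 'rV[R]_4) : 'M[R]_3 :=
  let w := qw q in let x := qx q in let y := qy q in let z := qz q in
  \matrix_(i < 3, j < 3)
    match nat_of_ord i, nat_of_ord j with
    | 0, 0 => 1 - 2 * y ^+ 2 - 2 * z ^+ 2
    | 0, 1 => 2 * (x * y - z * w)
    | 0, _ => 2 * (x * z + y * w)
    | 1, 0 => 2 * (x * y + z * w)
    | 1, 1 => 1 - 2 * x ^+ 2 - 2 * z ^+ 2
    | 1, _ => 2 * (y * z - x * w)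
    | _, 0 => 2 * (x * z - y * w)
    | _, 1 => 2 * (y * z + x * w)
    | _, _ => 1 - 2 * x ^+ 2 - 2 * y ^+ 2
    end.

Definition rotdist {R : realType} (R1 R2 : 'M[R]_3) : R :=
  acos ((\tr (R2 *m invmx R1) - 1) / 2).

From HB Require Import structures.
From mathcomp Require Import all_boot all_order all_algebra.
From mathcomp Require Import all_classical all_reals all_analysis.
From mathcomp Require Import ring.
Import Order.TTheory GRing.Theory Num.Theory.
Import numFieldNormedType.Exports.
Local Open Scope classical_set_scope.
Local Open Scope ring_scope.

(* The rotations [RQ (cos t + k sin t)], for [t] in [[0, pi]], form a closed
   loop in SO(3) whose quaternion lift runs from [1] to [-1]. Along this loop
   [phi t := <cos t + k sin t, f (RQ (cos t + k sin t))>] is continuous and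
   [phi pi = - phi 0], so [phi] vanishes somewhere by the intermediate value
   theorem. For unit quaternions [d (RQ p) (RQ q) = acos (2 <p, q>^2 - 1)],
   which is [pi] as soon as [p] and [q] are orthogonal. *)

Lemma continuous_matrix (U : topologicalType) (T : puniformType) m n
    (F : 'I_m -> 'I_n -> U -> T) :
  (forall i j, continuous (F i j)) -> continuous (fun x => \matrix_(i, j) F i j x).
Proof.
move=> cF x; apply/cvg_mx_entourageP => A entA; rewrite near_map.
apply: filter_forall => i; apply: filter_forall => j.
near=> t; rewrite !mxE inE; near: t.
exact: (cvg_app_entourageP _ _ _).1 (cF i j x) A entA.
Unshelve. all: by end_near. Qed.

Lemma continuous_comp_within {U V W : topologicalType} {A : set V}
    {g : U -> V} {f : V -> W} :
  continuous g -> (forall x, A (g x)) -> {within A, continuous f} ->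
  continuous (f \o g).
Proof.
move=> cg gA cf x.
have cfA : f @ within A (nbhs (g x)) --> f (g x).
  by rewrite (nbhs_subspace_in (gA x)); exact: cf.
apply: cvg_comp cfA => P /(cg x) gP.
by apply: (@filterS _ (nbhs x) _ _ _ _ gP) => y /(_ (gA y)).
Qed.

Lemma IVT_opp {R : realType} {f : R -> R} {a b : R} :
  a <= b -> {within `[a, b], continuous f} -> f b = - f a -> exists c, f c = 0.
Proof.
move=> ab cf fba.
have f0 : Num.min (f a) (f b) <= 0 <= Num.max (f a) (f b).
  rewrite fba ge_min le_max oppr_le0 oppr_ge0.
  by rewrite [X in X && _]orbC andbb le_total.
by have [c _ fc0] := IVT ab cf f0; exists c.
Qed.

Lemma det_mx33 (R : comNzRingType) (A : 'M[R]_3) : \det A =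
  A 0 0 * (A 1 1 * A 2 2 - A 1 2 * A 2 1)
  - A 0 1 * (A 1 0 * A 2 2 - A 1 2 * A 2 0)
  + A 0 2 * (A 1 0 * A 2 1 - A 1 1 * A 2 0).
Proof.
pose a (i j : nat) := A (inord i) (inord j).
have -> : A = \matrix_(i, j) a i j by apply/matrixP => i j; rewrite mxE /a !inord_val.
do 3 rewrite !(expand_det_row _ ord0) !big_ord_recr ?big_ord0 /= /cofactor.
rewrite !det_mx00 !mxE /= /bump /= !(add0n, addn0).
change (1 %% 3)%N with 1%N; change ((1 + 1) %% 3)%N with 2%N.
rewrite !expr0 !expr1 ?sqrrN1.
ring.
Qed.

Section quaternion_rotation.
Context {R : realType}.
Implicit Types (p q : 'rV[R]_4) (M : 'M[R]_3).

Definition quat_dot p q : R :=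
  qw p * qw q + qx p * qx q + qy p * qy q + qz p * qz q.

(* The homogeneous form of [RQ]: the rotation identities hold for it without
   any normalisation hypothesis on the quaternion. *)
Definition RQ_hom q : 'M[R]_3 :=
  let w := qw q in let x := qx q in let y := qy q in let z := qz q in
  \matrix_(i < 3, j < 3)
    match nat_of_ord i, nat_of_ord j with
    | 0, 0 => w ^+ 2 + x ^+ 2 - y ^+ 2 - z ^+ 2
    | 0, 1 => 2 * (x * y - z * w)
    | 0, _ => 2 * (x * z + y * w)
    | 1, 0 => 2 * (x * y + z * w)
    | 1, 1 => w ^+ 2 - x ^+ 2 + y ^+ 2 - z ^+ 2
    | 1, _ => 2 * (y * z - x * w)
    | _, 0 => 2 * (x * z - y * w)
    | _, 1 => 2 * (y * z + x * w)
    | _, _ => w ^+ 2 - x ^+ 2 - y ^+ 2 + z ^+ 2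
    end.

Lemma quat_dotNl p q : quat_dot (- p) q = - quat_dot p q.
Proof. by rewrite /quat_dot /qw /qx /qy /qz !mxE; ring. Qed.

Lemma S3_quat_dot q : S3 q -> quat_dot q q = 1.
Proof. by rewrite /S3 /quat_dot => <-; ring. Qed.

Lemma RQN q : RQ (- q) = RQ q.
Proof.
apply/matrixP => i j; rewrite /RQ /qw /qx /qy /qz !mxE.
by case: i j => [[|[|[|?]]] ?] [[|[|[|?]]] ?] //=; ring.
Qed.

Lemma RQ_homE q : S3 q -> RQ q = RQ_hom q.
Proof.
rewrite /S3 /RQ /RQ_hom => hq; apply/matrixP => i j; rewrite !mxE.
by case: i j => [[|[|[|?]]] ?] [[|[|[|?]]] ?] //=; rewrite -?[X in X - _ - _ = _]hq; ring.
Qed.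

Lemma RQ_hom_mulmx_tr q : RQ_hom q *m (RQ_hom q)^T = (quat_dot q q ^+ 2)%:M.
Proof.
apply/matrixP => i j; rewrite !mxE !big_ord_recr big_ord0 /= !mxE /quat_dot.
by case: i j => [[|[|[|?]]] ?] [[|[|[|?]]] ?] //=; ring.
Qed.

Lemma det_RQ_hom q : \det (RQ_hom q) = quat_dot q q ^+ 3.
Proof. by rewrite det_mx33 !mxE /= /quat_dot; ring. Qed.

Lemma mxtrace_RQ_hom_mulmx_tr p q :
  \tr (RQ_hom q *m (RQ_hom p)^T) = 4 * quat_dot p q ^+ 2 - quat_dot p p * quat_dot q q.
Proof.
rewrite /mxtrace !big_ord_recr !big_ord0 /= !mxE !big_ord_recr !big_ord0 /= !mxE /=.
by rewrite /quat_dot; ring.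
Qed.

Lemma RQ_SO3 q : S3 q -> SO3 (RQ q).
Proof.
move=> Sq; rewrite RQ_homE //; split.
  by rewrite RQ_hom_mulmx_tr S3_quat_dot // expr1n.
by rewrite det_RQ_hom S3_quat_dot // expr1n.
Qed.

Lemma invmx_SO3 M : SO3 M -> invmx M = M^T.
Proof.
move=> [MMt detM]; have Mu : M \in unitmx by rewrite unitmxE detM unitr1.
by rewrite -[RHS](mulKmx Mu) MMt mulmx1.
Qed.

Lemma rotdist_RQ p q : S3 p -> S3 q ->
  rotdist (RQ p) (RQ q) = acos (2 * quat_dot p q ^+ 2 - 1).
Proof.
move=> Sp Sq; rewrite /rotdist invmx_SO3; last exact: RQ_SO3.
rewrite !RQ_homE // mxtrace_RQ_hom_mulmx_tr !S3_quat_dot // mulr1.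
by congr acos; field.
Qed.

Lemma continuous_RQ : continuous (@RQ R).
Proof.
have cq k : continuous (fun q : 'rV[R]_4 => q ord0 k) by exact: coord_continuous.
apply: continuous_matrix => -[[|[|[|//]]] ?] [[|[|[|//]]] ?] q; cbn [nat_of_ord].
all: repeat first [ exact: cvg_cst | exact: cq | apply: (cvgB (F := nbhs q))
  | apply: (cvgD (F := nbhs q)) | apply: (cvgM (F := nbhs q)) ].
Qed.

Lemma continuous_quat_dot (T : topologicalType) (p q : T -> 'rV[R]_4) :
  continuous p -> continuous q -> continuous (fun t => quat_dot (p t) (q t)).
Proof.
move=> cp cq t.
have ck (r : T -> 'rV[R]_4) k : continuous r -> (fun t => r t ord0 k) @ t --> r t ord0 k.
  move=> cr; apply: (@continuous_comp _ _ _ r (fun u : 'rV[R]_4 => u ord0 k)).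
  - exact: cr.
  - exact: coord_continuous.
rewrite /quat_dot /qw /qx /qy /qz.
by repeat first [ exact: ck p _ cp | exact: ck q _ cq
  | apply: (cvgD (F := nbhs t)) | apply: (cvgM (F := nbhs t)) ].
Qed.

(* [cos t + k sin t], representing the rotation by [2 t] about the z-axis. *)
Definition zrot_quat (t : R) : 'rV[R]_4 :=
  \row_(i < 4) match nat_of_ord i with 0 => cos t | 3 => sin t | _ => 0 end.

Lemma zrot_quat_S3 t : S3 (zrot_quat t).
Proof. by rewrite /S3 /= /qw /qx /qy /qz !mxE /= expr0n /= !addr0 cos2Dsin2. Qed.

Lemma zrot_quat_pi : zrot_quat pi = - zrot_quat 0.
Proof.
apply/rowP => -[[|[|[|[|//]]]] ?]; rewrite !mxE /=.
- by rewrite cospi cos0.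
- by rewrite oppr0.
- by rewrite oppr0.
- by rewrite sinpi sin0 oppr0.
Qed.

Lemma continuous_zrot_quat : continuous zrot_quat.
Proof.
apply: continuous_matrix => _ [[|[|[|[|//]]]] ?] t; cbn [nat_of_ord].
- exact: continuous_cos.
- exact: cvg_cst.
- exact: cvg_cst.
- exact: continuous_sin.
Qed.

End quaternion_rotation.

Theorem theorem1 (R : realType) (f : 'M[R]_3 -> 'rV[R]_4)
  (fcont : {within @SO3 R, continuous f})
  (fS3 : forall M, @SO3 R M -> @S3 R (f M)) :
  exists2 M, @SO3 R M & rotdist M (RQ (f M)) = pi.
Proof.
pose M (t : R) := RQ (zrot_quat t).
have M_SO3 t : SO3 (M t) by exact/RQ_SO3/zrot_quat_S3.
have cM : continuous M.
  by move=> t; apply: continuous_comp (continuous_zrot_quat t) (continuous_RQ _).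
pose phi (t : R) := quat_dot (zrot_quat t) (f (M t)).
have cphi : continuous phi.
  have cfM : continuous (f \o M) := continuous_comp_within cM M_SO3 fcont.
  exact: continuous_quat_dot continuous_zrot_quat cfM.
have phi_pi : phi pi = - phi 0 by rewrite /phi /M zrot_quat_pi RQN quat_dotNl.
have [c phic0] := IVT_opp (pi_ge0 R) (continuous_subspaceT cphi) phi_pi.
exists (M c) => //.
rewrite (rotdist_RQ _ _ (zrot_quat_S3 c) (fS3 _ (M_SO3 c))) -/(phi c) phic0.
by rewrite expr0n mulr0 add0r acosN1.
Qed.
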